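(* Let $p, q \in \mathbb{R}$ with $q \le p$. Then $$\frac{\mathscr{P}_p(v)}{\mathscr{P}_q(v)} \le \exp\bigg( \frac{p-q}{8} \Big(\ln\Big(\frac{\max v}{\min v}\Big)\Big)^2 \bigg)$$ for every $n \in \mathbb{N}$ and every $v \in \mathbb{R}_+^n$. Moreover, the constant $\frac{p-q}{8}$ is sharp: if $C \in \mathbb{R}$ is such that $\frac{\mathscr{P}_p(v)}{\mathscr{P}_q(v)} \le \exp\big( C (\ln(\max v/\min v))^2\big)$ holds for all $n\in\mathbb{N}$ and all $v \in \mathbb{R}_+^n$, then $C \ge \frac{p-q}{8}$.
   Context: For $v = (v_1,\dots,v_n) \in \mathbb{R}_+^n$ (vectors of positive reals), the power mean of order $p \in \mathbb{R}$ is $\mathscr{P}_p(v) = \big(\frac{v_1^p + \cdots + v_n^p}{n}\big)^{1/p}$ for $p \neq 0$ and $\mathscr{P}_0(v) = \sqrt[n]{v_1 \cdots v_n}$. Here $\max v$ and $\min v$ denote the largest and smallest entry of $v$. *)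

From mathcomp Require Import all_boot all_order all_algebra.
From mathcomp Require Import all_classical all_reals all_analysis.
Set Implicit Arguments. Unset Strict Implicit. Unset Printing Implicit Defensive.
Import Order.TTheory GRing.Theory Num.Theory.
Local Open Scope ring_scope.

Definition power_mean (R : realType) (n : nat) (p : R) (v : 'I_n.+1 -> R) : R :=
  if p == 0 then (\prod_(i < n.+1) v i) `^ (n.+1%:R)^-1
  else ((n.+1%:R)^-1 * \sum_(i < n.+1) (v i) `^ p) `^ p^-1.

Definition vmax (R : realType) (n : nat) (v : 'I_n.+1 -> R) : R :=
  \big[Num.max/v ord0]_(i < n.+1) v i.
Definition vmin (R : realType) (n : nat) (v : 'I_n.+1 -> R) : R :=
  \big[Num.min/v ord0]_(i < n.+1) v i.

From mathcomp Require Import all_boot all_order all_algebra.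
From mathcomp Require Import all_classical all_reals all_analysis.
From mathcomp Require Import ring lra.
Import Order.TTheory GRing.Theory Num.Theory.
Set Implicit Arguments. Unset Strict Implicit. Unset Printing Implicit Defensive.
Local Open Scope ring_scope.

(* Write v_i = e^{x_i} and let Λ(t) = ln((1/n) Σ_i e^{t x_i}), so that ln P_t(v) = Λ(t)/t
   for t ≠ 0 and ln P_0(v) = Λ'(0), the mean of the x_i.  Hoeffding's lemma, applied to the
   weights e^{r x_i} (for which the weighted mean of the x_i is Λ'(r)), gives the tangent bound
     Λ(t) <= Λ(r) + (t - r) Λ'(r) + (t - r)^2 L^2/8,   L = ln (max v / min v),
   and for a function vanishing at 0 such tangent bounds make t ↦ Λ(t)/t - t L^2/8
   nonincreasing, which is the inequality.
   For sharpness take v = (e^{-y}, e^y): then L = 2y and Λ(t) = ln cosh(ty) = (ty)^2/2 + O(y^4),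
   so the ratio of power means is exp((p - q) y^2/2 + O(y^4)) while the bound is exp(4 C y^2);
   letting y go to 0 forces C >= (p - q)/8. *)

Section real_inequalities.
Variable R : realType.
Implicit Types F G H : R -> R.

Lemma is_derive_ge0_le F G (a b : R) : (forall x, is_derive x (1 : R) F (G x)) -> a <= b ->
  (forall x, a <= x <= b -> 0 <= G x) -> F a <= F b.
Proof.
move=> dF ab G_ge0.
have derF x : derivable F x 1 by have [] := dF x.
apply: (@ger0_derive1_le_cc _ F a b) => //; rewrite ?in_itv /= ?lexx ?ab //.
- move=> x; rewrite in_itv /= => /andP[ax xb].
  by rewrite derive1E (@derive_val _ _ _ _ _ _ _ (dF x)) G_ge0 // !ltW.
- by apply: derivable_within_continuous => x _.
Qed.

Lemma is_derive_le0_ge F G (a b : R) : (forall x, is_derive x (1 : R) F (G x)) -> a <= b ->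
  (forall x, a <= x <= b -> G x <= 0) -> F b <= F a.
Proof.
move=> dF ab G_le0; rewrite -lerN2.
by apply: (@is_derive_ge0_le (fun x => - F x) (fun x => - G x)) => // x /G_le0; rewrite oppr_ge0.
Qed.

Lemma ge0_of_derive2_ge0 F G H : (forall x, is_derive x (1 : R) F (G x)) ->
  (forall x, is_derive x (1 : R) G (H x)) -> (forall x, 0 <= H x) ->
  F 0 = 0 -> G 0 = 0 -> forall x, 0 <= F x.
Proof.
move=> dF dG H_ge0 F0 G0 x; rewrite -F0.
have G_le a b : a <= b -> G a <= G b by move=> ab; apply: is_derive_ge0_le dG ab _.
have [x_ge0 | x_lt0] := lerP 0 x.
- by apply: is_derive_ge0_le dF x_ge0 _ => y /andP[y_ge0 _]; rewrite -G0 G_le.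
- by apply: is_derive_le0_ge dF (ltW x_lt0) _ => y /andP[_ y_le0]; rewrite -G0 G_le.
Qed.

Lemma expR_convex_comb (a b l : R) : 0 <= l -> l <= 1 ->
  expR ((1 - l) * a + l * b) <= (1 - l) * expR a + l * expR b.
Proof.
move=> l_ge0 l_le1; have := convex_expR (Itv01 l_ge0 l_le1) b a.
by rewrite !convRE /= [_ * a]mulrC addrC [X in _ <= X]addrC.
Qed.

Lemma ln_bernoulli_mgf_le (th s : R) : 0 <= th <= 1 ->
  ln (1 - th + th * expR s) <= th * s + s ^+ 2 / 8.
Proof.
case/andP=> th_ge0 th_le1.
pose D u := 1 - th + th * expR u.
have D_gt0 u : 0 < D u by have := expR_gt0 u; rewrite /D; nra.
have D_neq0 u : D u != 0 by rewrite gt_eqF.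
pose F u := th * u + u ^+ 2 / 8 - ln (D u).
pose G u := th + u / 4 - th * expR u / D u.
pose H u := (1 - th - th * expR u) ^+ 2 / (4 * D u ^+ 2).
have dD u : is_derive u (1 : R) D (th * expR u).
  by rewrite /D; apply: is_derive_eq; rewrite add0r mul1r.
have dF u : is_derive u (1 : R) F (G u).
  have := is_derive1_comp (is_derive1_ln (D_gt0 u)) (dD u).
  rewrite /F /G => dlnD; apply: is_derive_eq.
  by rewrite /GRing.scale /= ?mulr0 ?mulr1; field; exact: D_neq0.
have dG u : is_derive u (1 : R) G (H u).
  have := is_deriveV (D_neq0 u) (dD u).
  rewrite /G /H => dDV; apply: is_derive_eq.
  by rewrite /GRing.scale /= ?mulr0 ?mulr1; move: (D_neq0 u); rewrite /D => Du; field; exact: Du.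
have H_ge0 u : 0 <= H u by apply/divr_ge0/mulr_ge0; rewrite ?sqr_ge0.
have F0 : F 0 = 0 by rewrite /F /D expR0 mulr1 subrK ln1 mulr0 expr0n /= mul0r !addr0 subr0.
have G0 : G 0 = 0 by rewrite /G /D expR0 mulr1 subrK divr1 mul0r addr0 subrr.
by have := ge0_of_derive2_ge0 dF dG H_ge0 F0 G0 s; rewrite /F subr_ge0.
Qed.

Lemma expR_add_expRN_ge (z : R) : 2 + z ^+ 2 <= expR z + expR (- z).
Proof.
have dexpN x : is_derive x (1 : R) (fun u => expR (- u)) (- expR (- x)).
  by have := is_derive1_comp (is_derive_expR (- x)) (is_deriveNid x 1); rewrite mulrN1.
pose F (u : R) := expR u + expR (- u) - 2 - u ^+ 2.
pose G (u : R) := expR u - expR (- u) - 2 * u.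
pose H (u : R) := expR u + expR (- u) - 2.
have dF u : is_derive u (1 : R) F (G u).
  by have := dexpN u; rewrite /F /G => ?; apply: is_derive_eq; rewrite /GRing.scale /=; ring.
have dG u : is_derive u (1 : R) G (H u).
  by have := dexpN u; rewrite /G /H => ?; apply: is_derive_eq; rewrite /GRing.scale /=; ring.
have H_ge0 u : 0 <= H u.
  have eu_gt0 := expR_gt0 u.
  have -> : H u = (expR u - 1) ^+ 2 / expR u by rewrite /H expRN; field; rewrite gt_eqF.
  by rewrite divr_ge0 ?sqr_ge0 ?ltW.
have F0 : F 0 = 0 by rewrite /F oppr0 expR0; ring.
have G0 : G 0 = 0 by rewrite /G oppr0 expR0; ring.
by have := ge0_of_derive2_ge0 dF dG H_ge0 F0 G0 z; rewrite /F; lra.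
Qed.

Lemma ln1Dx_ge (x : R) : 0 <= x -> x - x ^+ 2 <= ln (1 + x).
Proof.
move=> x_ge0; have x1_gt0 : 0 < 1 + x by lra.
have := expR_ge1Dx (- ln (1 + x)); rewrite expRN lnK ?posrE // => ln_ge.
suff : x - x ^+ 2 <= 1 - (1 + x)^-1 by lra.
have -> : 1 - (1 + x)^-1 = x / (1 + x) by field; rewrite gt_eqF.
by rewrite ler_pdivlMr //; have := exprn_ge0 3 x_ge0; lra.
Qed.

End real_inequalities.

Section hoeffding.
Variable R : realType.

Lemma expR_le_chord (a b x s : R) : a < b -> a <= x <= b ->
  expR (s * x) <=
  expR (s * a) * (1 - (x - a) / (b - a) + (x - a) / (b - a) * expR (s * (b - a))).
Proof.
move=> ab /andP[ax xb]; set l := (x - a) / (b - a).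
have ba_gt0 : 0 < b - a by rewrite subr_gt0.
have l_ge0 : 0 <= l by apply: divr_ge0; rewrite subr_ge0 // ltW.
have l_le1 : l <= 1 by rewrite ler_pdivrMr // mul1r lerD2r.
have -> : s * x = (1 - l) * (s * a) + l * (s * b) by rewrite /l; field; exact: lt0r_neq0.
apply: le_trans (expR_convex_comb _ _ l_ge0 l_le1) _.
by rewrite -[s * b](subrKC (s * a)) -mulrBr expRD; lra.
Qed.

Definition weighted_mean (I : finType) (w x : I -> R) := (\sum_i w i * x i) / \sum_i w i.

Lemma weighted_mean_in_itv (I : finType) (w x : I -> R) (a b : R) :
  (forall i, 0 <= w i) -> 0 < \sum_i w i -> (forall i, a <= x i <= b) ->
  a <= weighted_mean w x <= b.
Proof.
move=> w_ge0 W_gt0 x_ab.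
rewrite /weighted_mean ler_pdivlMr // ler_pdivrMr // !mulr_sumr.
apply/andP; split; apply: ler_sum => i _; have /andP[ax xb] := x_ab i.
- by rewrite [a * _]mulrC ler_wpM2l.
- by rewrite [b * _]mulrC ler_wpM2l.
Qed.

Lemma hoeffding_sum (I : finType) (w x : I -> R) (a b s : R) :
  (forall i, 0 <= w i) -> 0 < \sum_i w i -> (forall i, a <= x i <= b) ->
  \sum_i w i * expR (s * x i) <=
  (\sum_i w i) * expR (s * weighted_mean w x + s ^+ 2 * (b - a) ^+ 2 / 8).
Proof.
move=> w_ge0 W_gt0 x_ab; set W := \sum_i w i; set m := weighted_mean w x.
have W_neq0 : W != 0 by rewrite gt_eqF.
have [ab | ba] := ltrP a b; last first.
  have xa i : x i = a.
    by case/andP: (x_ab i) => ax xb; apply/eqP; rewrite eq_le ax (le_trans xb ba).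
  have -> : m = a.
    rewrite /m /weighted_mean (eq_bigr (fun i => w i * a)) => [|i _]; last by rewrite xa.
    by rewrite -mulr_suml mulrAC divff ?mul1r.
  rewrite (eq_bigr (fun i => w i * expR (s * a))) => [|i _]; last by rewrite xa.
  rewrite -mulr_suml -/W ler_wpM2l ?(ltW W_gt0) // ler_expR lerDl.
  by apply: divr_ge0; rewrite // -exprMn sqr_ge0.
have ba_gt0 : 0 < b - a by rewrite subr_gt0.
set th := (m - a) / (b - a); set E := expR (s * (b - a)).
have th01 : 0 <= th <= 1.
  have /andP[am mb] := weighted_mean_in_itv w_ge0 W_gt0 x_ab.
  rewrite /th ler_pdivrMr // mul1r lerD2r mb andbT.
  by apply: divr_ge0; rewrite subr_ge0 // ltW.
have chord_sum : \sum_i w i * expR (s * x i) <= expR (s * a) * (W * (1 - th + th * E)).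
  have sum_wl : \sum_i w i * ((x i - a) / (b - a)) = W * th.
    rewrite (eq_bigr (fun i => (w i * x i - a * w i) / (b - a))) => [|i _]; last first.
      by rewrite mulrA mulrBr [a * _]mulrC.
    rewrite -mulr_suml sumrB -mulr_sumr -/W /th /m /weighted_mean -/W.
    by field; rewrite W_neq0 lt0r_neq0.
  have -> : expR (s * a) * (W * (1 - th + th * E)) =
      \sum_i expR (s * a) * (w i + (E - 1) * (w i * ((x i - a) / (b - a)))).
    by rewrite -mulr_sumr big_split /= -mulr_sumr sum_wl -/W; ring.
  apply: ler_sum => i _; apply: le_trans (ler_wpM2l (w_ge0 i) (expR_le_chord s ab (x_ab i))) _.
  by rewrite /E; lra.
have bern : 1 - th + th * E <= expR (th * (s * (b - a)) + (s * (b - a)) ^+ 2 / 8).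
  rewrite -ler_ln ?posrE ?expR_gt0 ?expRK ?ln_bernoulli_mgf_le //.
  by case/andP: th01 => th0 th1; rewrite /E; have := expR_gt0 (s * (b - a)); nra.
apply: le_trans chord_sum _.
have -> : s * m + s ^+ 2 * (b - a) ^+ 2 / 8 = s * a + (th * (s * (b - a)) + (s * (b - a)) ^+ 2 / 8).
  by rewrite /th; field; rewrite gt_eqF.
rewrite expRD mulrCA; apply: ler_wpM2l; first exact: ltW.
by apply: ler_wpM2l; first exact: expR_ge0.
Qed.

End hoeffding.

Definition chord_slope (R : realType) (f : R -> R) (m t : R) :=
  if t == 0 then m else f t / t.

Section chord_slope_increment.
Variables (R : realType) (f g : R -> R) (c : R).
Hypothesis f_tangent_le : forall r t, f t <= f r + (t - r) * g r + (t - r) ^+ 2 * c.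
Hypothesis f0 : f 0 = 0.

Let f_le_at0 t : f t <= t * g 0 + t ^+ 2 * c.
Proof. by have := f_tangent_le 0 t; rewrite f0 add0r !subr0. Qed.

Lemma chord_slope_le_at0 t : 0 <= t -> chord_slope f (g 0) t <= g 0 + t * c.
Proof.
rewrite /chord_slope le_eqVlt => /orP[/eqP<- | t_gt0]; first by rewrite eqxx mul0r addr0.
by rewrite gt_eqF // ler_pdivrMr //; have := f_le_at0 t; rewrite expr2; lra.
Qed.

Lemma chord_slope_ge_at0 t : t <= 0 -> g 0 + t * c <= chord_slope f (g 0) t.
Proof.
rewrite /chord_slope le_eqVlt => /orP[/eqP-> | t_lt0]; first by rewrite eqxx mul0r addr0.
by rewrite lt_eqF // ler_ndivlMr //; have := f_le_at0 t; rewrite expr2; lra.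
Qed.

Lemma chord_slope_incr_pos q p : 0 < q -> q <= p ->
  chord_slope f (g 0) p - chord_slope f (g 0) q <= (p - q) * c.
Proof.
move=> q_gt0 qp; have p_gt0 := lt_le_trans q_gt0 qp.
rewrite /chord_slope !gt_eqF //.
have at_p : 0 <= q * (f q + (p - q) * g q + (p - q) ^+ 2 * c - f p).
  by apply: mulr_ge0; rewrite ?subr_ge0 // ltW.
have at_0 : 0 <= (p - q) * (f q - q * g q + q ^+ 2 * c).
  apply: mulr_ge0; first by rewrite subr_ge0.
  by have := f_tangent_le q 0; rewrite f0 sub0r mulNr sqrrN.
have -> : f p / p - f q / q = (q * f p - p * f q) / (p * q).
  by field; rewrite !gt_eqF.
by rewrite ler_pdivrMr ?mulr_gt0 //; lra.
Qed.

End chord_slope_increment.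

Lemma chord_slope_reflect (R : realType) (f : R -> R) m t :
  chord_slope (fun u => f (- u)) (- m) t = - chord_slope f m (- t).
Proof. by rewrite /chord_slope oppr_eq0; case: eqP => // _; rewrite invrN mulrN opprK. Qed.

Lemma chord_slope_incr (R : realType) (f g : R -> R) (c q p : R) :
  (forall r t, f t <= f r + (t - r) * g r + (t - r) ^+ 2 * c) -> f 0 = 0 -> q <= p ->
  chord_slope f (g 0) p - chord_slope f (g 0) q <= (p - q) * c.
Proof.
move=> f_tan f0 qp.
have [q_gt0 | q_le0] := ltrP 0 q; first exact: chord_slope_incr_pos.
have [p_lt0 | p_ge0] := ltrP p 0; last first.
  by have := chord_slope_le_at0 f_tan f0 p_ge0; have := chord_slope_ge_at0 f_tan f0 q_le0; lra.
have fN_tan r t : f (- t) <= f (- r) + (t - r) * - g (- r) + (t - r) ^+ 2 * c.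
  by have := f_tan (- r) (- t); rewrite -opprD sqrrN mulrN -mulNr opprB addrC.
have fN0 : f (- 0) = 0 by rewrite oppr0.
have Np_gt0 : 0 < - p by rewrite oppr_gt0.
have Nqp : - p <= - q by rewrite lerN2.
have := chord_slope_incr_pos fN_tan fN0 Np_gt0 Nqp.
by rewrite !chord_slope_reflect oppr0 !opprK; lra.
Qed.

Section power_means.
Variables (R : realType) (n : nat) (v : 'I_n.+1 -> R).

Definition power_sum (t : R) := \sum_i expR (t * ln (v i)).
Definition cumulant (t : R) := ln (power_sum t / n.+1%:R).
Definition tilted_mean (r : R) := weighted_mean (fun i => expR (r * ln (v i))) (fun i => ln (v i)).
Definition log_power_mean (t : R) := chord_slope cumulant (tilted_mean 0) t.

Lemma power_sum_gt0 t : 0 < power_sum t.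
Proof.
rewrite /power_sum big_ord_recl ltr_pwDl ?expR_gt0 //.
by apply: sumr_ge0 => i _; exact: expR_ge0.
Qed.

Lemma power_sum0 : power_sum 0 = n.+1%:R.
Proof.
rewrite /power_sum (eq_bigr (fun=> 1)) => [|i _]; last by rewrite mul0r expR0.
by rewrite sumr_const card_ord.
Qed.

Lemma cumulant0 : cumulant 0 = 0.
Proof. by rewrite /cumulant power_sum0 divff ?ln1 ?pnatr_eq0. Qed.

Hypothesis v_gt0 : forall i, 0 < v i.

Lemma vmin_gt0 : 0 < vmin v.
Proof. by rewrite /vmin; elim/big_ind: _ => // x y x_gt0 y_gt0; rewrite lt_min x_gt0. Qed.

Lemma power_meanE t : power_mean t v = expR (log_power_mean t).
Proof.
have N_gt0 : 0 < n.+1%:R :> R by rewrite ltr0n.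
rewrite /power_mean /log_power_mean /chord_slope; case: eqP => [_ | /eqP t_neq0].
  have -> : \prod_i v i = expR (\sum_i ln (v i)).
    by rewrite expR_sum; apply: eq_bigr => i _; rewrite lnK ?posrE.
  rewrite /powR expR_eq0 expRK /tilted_mean /weighted_mean -/(power_sum 0) power_sum0 mulrC.
  by congr (expR (_ / _)); apply: eq_bigr => i _; rewrite mul0r expR0 mul1r.
have -> : \sum_i v i `^ t = power_sum t.
  by apply: eq_bigr => i _; rewrite /powR gt_eqF.
rewrite /powR mulf_eq0 invr_eq0 pnatr_eq0 /= gt_eqF ?power_sum_gt0 //.
by rewrite /cumulant mulrC [_ / n.+1%:R]mulrC.
Qed.

Lemma power_mean_ratioE p q :
  power_mean p v / power_mean q v = expR (log_power_mean p - log_power_mean q).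
Proof. by rewrite !power_meanE expRD expRN. Qed.

Lemma cumulant_tangent_le r t :
  cumulant t <=
  cumulant r + (t - r) * tilted_mean r + (t - r) ^+ 2 * (ln (vmax v / vmin v) ^+ 2 / 8).
Proof.
have vmax_gt0 : 0 < vmax v := lt_le_trans (v_gt0 ord0) (le_bigmax _ _ ord0).
have ln_v_range i : ln (vmin v) <= ln (v i) <= ln (vmax v).
  by rewrite !ler_ln ?posrE ?v_gt0 ?vmin_gt0 // bigmin_le le_bigmax.
have := hoeffding_sum (t - r) (fun i => expR_ge0 (r * ln (v i))) (power_sum_gt0 r) ln_v_range.
rewrite -/(power_sum r) -/(tilted_mean r).
under eq_bigr do rewrite -expRD -mulrDl subrKC.
rewrite -/(power_sum t) -(ler_ln (power_sum_gt0 t)) ?posrE ?mulr_gt0 ?power_sum_gt0 ?expR_gt0 //.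
rewrite lnM ?posrE ?power_sum_gt0 ?expR_gt0 // expRK.
rewrite /cumulant !lnM ?posrE ?power_sum_gt0 ?invr_gt0 ?ltr0n ?vmax_gt0 ?vmin_gt0 //.
by rewrite !lnV ?posrE ?vmin_gt0 ?ltr0n //; lra.
Qed.

End power_means.

Lemma power_mean_ratio_le (R : realType) (p q : R) (n : nat) (v : 'I_n.+1 -> R) :
  (forall i, 0 < v i) -> q <= p ->
  power_mean p v / power_mean q v <= expR ((p - q) / 8 * ln (vmax v / vmin v) ^+ 2).
Proof.
move=> v_gt0 qp; rewrite (power_mean_ratioE v_gt0) ler_expR.
have := chord_slope_incr (cumulant_tangent_le v_gt0) (cumulant0 v) qp.
by rewrite /log_power_mean; lra.
Qed.

Section two_point_vector.
Variable R : realType.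

Definition two_point (y : R) : 'I_2 -> R := fun i => expR (if i == ord0 then - y else y).

Lemma two_point_gt0 y i : 0 < two_point y i.
Proof. exact: expR_gt0. Qed.

Lemma ln_two_point_ratio y : 0 <= y -> ln (vmax (two_point y) / vmin (two_point y)) = 2 * y.
Proof.
move=> y_ge0; have eNy_le : expR (- y) <= expR y by rewrite ler_expR; lra.
rewrite /vmax /vmin !big_ord_recl !big_ord0 /two_point /=.
rewrite (max_l eNy_le) (max_r eNy_le) (min_r eNy_le) minxx.
by rewrite -expRN -expRD expRK opprK; ring.
Qed.

Lemma cumulant_two_point y t :
  cumulant (two_point y) t = ln ((expR (- (t * y)) + expR (t * y)) / 2).
Proof. by rewrite /cumulant /power_sum !big_ord_recl big_ord0 /two_point /= !expRK addr0 mulrN. Qed.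

Lemma tilted_mean_two_point0 y : tilted_mean (two_point y) 0 = 0.
Proof.
rewrite /tilted_mean /weighted_mean !big_ord_recl !big_ord0 /two_point /=.
by rewrite !mul0r expR0 !mul1r !expRK addr0 addNr mul0r.
Qed.

Lemma cumulant_two_point_near y t : 0 <= y ->
  `|cumulant (two_point y) t - (t * y) ^+ 2 / 2| <= (t * y) ^+ 4 / 4.
Proof.
move=> y_ge0; rewrite ler_distl; apply/andP; split.
  rewrite cumulant_two_point; set z := t * y.
  have z2_ge0 : 0 <= z ^+ 2 / 2 by rewrite divr_ge0 ?sqr_ge0.
  have -> : z ^+ 4 / 4 = (z ^+ 2 / 2) ^+ 2 by field.
  apply: le_trans (ln1Dx_ge z2_ge0) _.
  have cosh_gt0 : 0 < (expR (- z) + expR z) / 2 by rewrite divr_gt0 ?addr_gt0 ?expR_gt0.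
  have z2D1_gt0 : 0 < 1 + z ^+ 2 / 2 by lra.
  rewrite ler_ln ?posrE //.
  by have := expR_add_expRN_ge z; lra.
have := cumulant_tangent_le (two_point_gt0 y) 0 t.
rewrite cumulant0 tilted_mean_two_point0 ln_two_point_ratio // !subr0.
have : 0 <= (t * y) ^+ 4 / 4 by rewrite divr_ge0 ?exprn_even_ge0.
by rewrite !exprMn; lra.
Qed.

Lemma log_power_mean_two_point_near y t : 0 <= y ->
  `|log_power_mean (two_point y) t - t * y ^+ 2 / 2| <= `|t| ^+ 3 * y ^+ 4 / 4.
Proof.
move=> y_ge0; rewrite /log_power_mean /chord_slope.
case: eqP => [-> | /eqP t_neq0].
  by rewrite tilted_mean_two_point0 !mul0r subr0 normr0 expr0n /= !mul0r.
have -> : cumulant (two_point y) t / t - t * y ^+ 2 / 2 =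
          (cumulant (two_point y) t - (t * y) ^+ 2 / 2) / t by field.
rewrite normf_div ler_pdivrMr ?normr_gt0 //.
have -> : `|t| ^+ 3 * y ^+ 4 / 4 * `|t| = (t * y) ^+ 4 / 4.
  by rewrite exprMn -[t ^+ 4]ger0_norm ?exprn_even_ge0 // normrX; ring.
exact: cumulant_two_point_near.
Qed.

End two_point_vector.

Lemma le0_of_forall_le_sqr (R : realType) (d A : R) :
  0 <= A -> (forall y, 0 < y -> d <= A * y ^+ 2) -> d <= 0.
Proof.
move=> A_ge0 d_le; apply/ler_addgt0Pr => e e_gt0; rewrite add0r.
have A1_gt0 : 0 < A + 1 by lra.
have y2 : Num.sqrt (e / (A + 1)) ^+ 2 = e / (A + 1) by rewrite sqr_sqrtr // divr_ge0 // ltW.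
apply: le_trans (d_le (Num.sqrt (e / (A + 1))) _) _; first by rewrite sqrtr_gt0 divr_gt0.
by rewrite y2 mulrA ler_pdivrMr //; lra.
Qed.

Lemma power_mean_ratio_sharp (R : realType) (p q C : R) :
  (forall n (v : 'I_n.+1 -> R), (forall i, 0 < v i) ->
     power_mean p v / power_mean q v <= expR (C * ln (vmax v / vmin v) ^+ 2)) ->
  (p - q) / 8 <= C.
Proof.
move=> ratio_le; set A := (`|p| ^+ 3 + `|q| ^+ 3) / 16.
have A_ge0 : 0 <= A by rewrite divr_ge0 ?addr_ge0 ?exprn_ge0.
suff : (p - q) / 8 - C <= 0 by lra.
apply: (le0_of_forall_le_sqr A_ge0) => y y_gt0; have y_ge0 := ltW y_gt0.
have := ratio_le _ _ (two_point_gt0 y).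
rewrite (power_mean_ratioE (two_point_gt0 y)) ler_expR ln_two_point_ratio // => slope_le.
have := log_power_mean_two_point_near p y_ge0; rewrite ler_distl => /andP[lo_p _].
have := log_power_mean_two_point_near q y_ge0; rewrite ler_distl => /andP[_ hi_q].
have y2_gt0 : 0 < 4 * y ^+ 2 by rewrite mulr_gt0 ?exprn_gt0.
by rewrite -(ler_pM2r y2_gt0) /A; lra.
Qed.

Theorem mainTheorem4 (R : realType) (p q : R) (hqp : q <= p) :
  (forall (n : nat) (v : 'I_n.+1 -> R), (forall i, 0 < v i) ->
     power_mean p v / power_mean q v
       <= expR ((p - q) / 8%:R * (ln (vmax v / vmin v)) ^+ 2))
  /\
  (forall C : R,
     (forall (n : nat) (v : 'I_n.+1 -> R), (forall i, 0 < v i) ->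
        power_mean p v / power_mean q v
          <= expR (C * (ln (vmax v / vmin v)) ^+ 2)) ->
     (p - q) / 8%:R <= C).
Proof.
split=> [n v v_gt0 | C ratio_le]; first exact: power_mean_ratio_le.
exact: power_mean_ratio_sharp.
Qed.
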